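(* Let $(b,c)$ be a weighted graph over $X$ and let $m$ be a measure on $X$ with $m(X)<\infty$. Let $\sigma$ be a pseudometric on $X$ which is intrinsic with respect to $m$. (a) If $c\equiv0$, then $\sigma\le\sqrt{m(X)}\,\varrho$ on $X\times X$. (b) If $C:=\sum_{x\in X}c(x)<\infty$ and $\sigma\le S$ on $X\times X$ for some constant $S\ge0$, then $\sigma\le\sqrt{m(X)+CS^2}\,\varrho$ on $X\times X$.
   Context: Let $X$ be a countably infinite set. A weighted graph $(b,c)$ over $X$ consists of a symmetric $b:X\times X\to[0,\infty)$ with $b(x,x)=0$ and $\sum_{y}b(x,y)<\infty$ for all $x$, and $c:X\to[0,\infty)$. For $f:X\to\mathbb C$ let $\widetilde Q(f)=\frac12\sum_{x,y}b(x,y)|f(x)-f(y)|^2+\sum_x c(x)|f(x)|^2\in[0,\infty]$ and $\widetilde D=\{f:\widetilde Q(f)<\infty\}$. Define $\varrho(x,y)=\sup\{|f(x)-f(y)|:f\in\widetilde D,\ \widetilde Q(f)\le1\}\in[0,\infty]$. A measure on $X$ is a function $m:X\to[0,\infty)$, with $m(A)=\sum_{x\in A}m(x)$. A pseudometric $\sigma:X\times X\to[0,\infty)$ is called intrinsic with respect to $m$ if $\frac12\sum_{y\in X}b(x,y)\sigma(x,y)^2\le m(x)$ for every $x\in X$. *)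

From Stdlib Require Export Reals List.
Export ListNotations.
Open Scope R_scope.

Definition fsum {A : Type} (l : list A) (f : A -> R) : R :=
  fold_right (fun a acc => f a + acc) 0 l.

(* Unordered sum of a nonnegative family over an arbitrary type:
   [has_sum f L] means L is the supremum of all finite partial sums
   (sums over duplicate-free finite lists); in particular the sum is finite. *)
Definition has_sum {A : Type} (f : A -> R) (L : R) : Prop :=
  is_lub (fun s => exists l : list A, NoDup l /\ s = fsum l f) L.

Definition summable {A : Type} (f : A -> R) : Prop :=
  exists M, forall l : list A, NoDup l -> fsum l f <= M.

Definition countably_infinite (X : Type) : Prop :=
  exists e : nat -> X, (forall n k, e n = e k -> n = k) /\ (forall x, exists n, e n = x).

Definition C := (R * R)%type.
Definition Cminus (z w : C) : C := (fst z - fst w, snd z - snd w).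
Definition Cnorm2 (z : C) : R := fst z * fst z + snd z * snd z.
Definition Cnorm (z : C) : R := sqrt (Cnorm2 z).

Definition weighted_graph {X : Type} (b : X -> X -> R) (c : X -> R) : Prop :=
  (forall x y, 0 <= b x y) /\ (forall x y, b x y = b y x) /\ (forall x, b x x = 0) /\
  (forall x, summable (b x)) /\ (forall x, 0 <= c x).

(* [Qtilde_le b c f r] : the (extended-valued) form
   Q~(f) = 1/2 sum_{x,y} b(x,y)|f x - f y|^2 + sum_x c(x)|f x|^2
   is finite and <= r (i.e. f is in D~ and Q~(f) <= r). *)
Definition Qtilde_le {X : Type} (b : X -> X -> R) (c : X -> R) (f : X -> C) (r : R) : Prop :=
  forall (l1 : list (X * X)) (l2 : list X), NoDup l1 -> NoDup l2 ->
    / 2 * fsum l1 (fun p => b (fst p) (snd p) * Cnorm2 (Cminus (f (fst p)) (f (snd p))))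
    + fsum l2 (fun x => c x * Cnorm2 (f x)) <= r.

(* [rho_le b c x y t] : varrho(x,y) <= t, where
   varrho(x,y) = sup { |f x - f y| : f in D~, Q~(f) <= 1 } in [0, oo]. *)
Definition rho_le {X : Type} (b : X -> X -> R) (c : X -> R) (x y : X) (t : R) : Prop :=
  forall f : X -> C, Qtilde_le b c f 1 -> Cnorm (Cminus (f x) (f y)) <= t.

(* [bounded_by_rho b c sigma K] : sigma <= K * varrho on X x X,
   with varrho extended-valued (the inequality is vacuous where varrho = oo). *)
Definition bounded_by_rho {X : Type} (b : X -> X -> R) (c : X -> R)
    (sigma : X -> X -> R) (K : R) : Prop :=
  forall x y t, rho_le b c x y t -> sigma x y <= K * t.

Definition pseudometric {X : Type} (sigma : X -> X -> R) : Prop :=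
  (forall x y, 0 <= sigma x y) /\ (forall x, sigma x x = 0) /\
  (forall x y, sigma x y = sigma y x) /\
  (forall x y z, sigma x z <= sigma x y + sigma y z).

Definition intrinsic {X : Type} (b : X -> X -> R) (m : X -> R) (sigma : X -> X -> R) : Prop :=
  forall x, forall l : list X, NoDup l ->
    / 2 * fsum l (fun y => b x y * (sigma x y)^2) <= m x.

From Pilot Require Import Defs.
From Stdlib Require Import Reals List Lra ClassicalEpsilon.
Open Scope R_scope.

(* Fix x0 and consider the real test functions f = lam * sigma(x0,.).
   By the triangle inequality |f z - f w| <= lam * sigma(z,w), hence
     Q~(f) <= lam^2 * (1/2 sum b sigma^2 + sum_z c(z) sigma(x0,z)^2).
   If the bracket ("the energy of sigma seen from x0") is at most K, every f with
   lam^2 K <= 1 is admissible in the definition of varrho, so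
   lam * sigma(x0,y0) <= varrho(x0,y0) and, optimising over lam,
   sigma(x0,y0) <= sqrt K * varrho(x0,y0).
   The energy is bounded by grouping the double sum by rows: intrinsicness bounds
   every row by 2 m(x), so 1/2 sum b sigma^2 <= m(X); the killing term vanishes
   when c = 0, and is at most S^2 * C when sigma <= S. *)

Lemma fsum_le {A : Type} (l : list A) (f g : A -> R) :
  (forall a, f a <= g a) -> fsum l f <= fsum l g.
Proof. intros H; induction l; simpl; [lra | specialize (H a); lra]. Qed.

Lemma fsum_ext {A : Type} (l : list A) (f g : A -> R) :
  (forall a, f a = g a) -> fsum l f = fsum l g.
Proof. intros H; induction l; simpl; [lra | rewrite H, IHl; auto]. Qed.

Lemma fsum_scal {A : Type} (l : list A) (f : A -> R) (k : R) :
  fsum l (fun a => k * f a) = k * fsum l f.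
Proof. induction l; simpl; [ring | rewrite IHl; ring]. Qed.

Lemma fsum_filter {A : Type} (l : list A) (g : A -> R) (P : A -> bool) :
  fsum l g = fsum (filter P l) g + fsum (filter (fun a => negb (P a)) l) g.
Proof. induction l; simpl; [lra |]. destruct (P a); simpl; lra. Qed.

Lemma has_sum_partial_le {A : Type} (f : A -> R) (L : R) (l : list A) :
  has_sum f L -> NoDup l -> fsum l f <= L.
Proof. intros [Hub _] Hl. apply Hub. exists l; auto. Qed.

Lemma fsum_row {X : Type} (x : X) (l : list (X * X)) (g : X * X -> R) :
  (forall p, In p l -> fst p = x) -> fsum l g = fsum (map snd l) (fun y => g (x, y)).
Proof.
  induction l as [|[a1 a2] l IH]; intros H; simpl; [lra |].
  rewrite IH by (intros; apply H; right; auto).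
  assert (a1 = x) by (apply (H (a1, a2)); left; auto). subst. reflexivity.
Qed.

Lemma NoDup_row {X : Type} (x : X) (l : list (X * X)) :
  NoDup l -> (forall p, In p l -> fst p = x) -> NoDup (map snd l).
Proof.
  induction l as [|a l IH]; intros Hn H; simpl; [constructor |].
  inversion Hn as [|? ? Hnotin Hn']; subst. constructor.
  - intro Hi. apply in_map_iff in Hi. destruct Hi as [p [Hp Hpl]].
    assert (fst p = fst a) by (rewrite (H p), (H a); auto; [left | right]; auto).
    apply Hnotin. replace a with p; auto. destruct p, a; simpl in *; subst; auto.
  - apply IH; auto; intros; apply H; right; auto.
Qed.

Lemma fsum_pairs_le_rows {X : Type} (g : X * X -> R) (h : X -> R)
  (Hrow : forall x ly, NoDup ly -> fsum ly (fun y => g (x, y)) <= h x) :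
  forall (L : list X) (l : list (X * X)), NoDup l ->
  (forall p, In p l -> In (fst p) L) -> fsum l g <= fsum L h.
Proof.
  induction L as [|x L IH]; intros l Hl Hin.
  - destruct l as [|p l]; simpl; [lra |]. exfalso; apply (Hin p); left; auto.
  - set (P := fun p : X * X => if excluded_middle_informative (fst p = x) then true else false).
    rewrite (fsum_filter l g P). simpl.
    assert (Hx : forall p, In p (filter P l) -> fst p = x).
    { intros p Hp. apply filter_In in Hp as [_ Hp]. unfold P in Hp.
      destruct (excluded_middle_informative (fst p = x)); auto; discriminate. }
    assert (Hrow_x := Hrow x _ (NoDup_row x _ (NoDup_filter _ Hl) Hx)).
    rewrite <- (fsum_row x _ g Hx) in Hrow_x.
    assert (Hrest : fsum (filter (fun a => negb (P a)) l) g <= fsum L h).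
    { apply IH; [apply NoDup_filter; auto |].
      intros p Hp. apply filter_In in Hp as [Hp Hq]. unfold P in Hq.
      destruct (excluded_middle_informative (fst p = x)); [discriminate |].
      destruct (Hin p Hp); auto. congruence. }
    lra.
Qed.

Lemma intrinsic_edge_energy_le {X : Type} (b : X -> X -> R) (m : X -> R) (mX : R)
  (sigma : X -> X -> R) (HmX : has_sum m mX) (Hint : intrinsic b m sigma)
  (l : list (X * X)) : NoDup l ->
  / 2 * fsum l (fun p => b (fst p) (snd p) * sigma (fst p) (snd p) ^ 2) <= mX.
Proof.
  intros Hl.
  set (L := nodup (fun u v : X => excluded_middle_informative (u = v)) (map fst l)).
  assert (Hrows : fsum l (fun p => b (fst p) (snd p) * sigma (fst p) (snd p) ^ 2)
                  <= fsum L (fun x => 2 * m x)).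
  { apply fsum_pairs_le_rows; auto.
    - intros x ly Hly. specialize (Hint x ly Hly).
      change (fsum ly (fun y => b x y * sigma x y ^ 2) <= 2 * m x). lra.
    - intros p Hp. apply nodup_In, in_map; auto. }
  rewrite fsum_scal in Hrows.
  assert (fsum L m <= mX) by (apply has_sum_partial_le; auto; apply NoDup_nodup).
  lra.
Qed.

Definition energy_le {X : Type} (b : X -> X -> R) (c : X -> R)
    (sigma : X -> X -> R) (x0 : X) (K : R) : Prop :=
  forall (l1 : list (X * X)) (l2 : list X), NoDup l1 -> NoDup l2 ->
    / 2 * fsum l1 (fun p => b (fst p) (snd p) * sigma (fst p) (snd p) ^ 2)
    + fsum l2 (fun z => c z * sigma x0 z ^ 2) <= K.

Definition scaled_dist {X : Type} (sigma : X -> X -> R) (x0 : X) (lam : R) : X -> Defs.C :=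
  fun z => (lam * sigma x0 z, 0).

Lemma pseudometric_lipschitz_sq {X : Type} (sigma : X -> X -> R) (x0 z w : X) :
  pseudometric sigma -> (sigma x0 z - sigma x0 w) ^ 2 <= sigma z w ^ 2.
Proof.
  intros [_ [_ [Hsym Htri]]].
  assert (Habs : Rabs (sigma x0 z - sigma x0 w) <= sigma z w).
  { pose proof (Htri x0 z w); pose proof (Htri x0 w z); pose proof (Hsym z w).
    apply Rabs_le; lra. }
  rewrite <- (pow2_abs (sigma x0 z - sigma x0 w)).
  apply pow_incr; split; [apply Rabs_pos | exact Habs].
Qed.

Lemma scaled_dist_Qtilde_le {X : Type} (b : X -> X -> R) (c : X -> R)
  (sigma : X -> X -> R) (x0 : X) (K lam : R) (Hb : forall x y, 0 <= b x y) :
  pseudometric sigma -> energy_le b c sigma x0 K ->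
  Qtilde_le b c (scaled_dist sigma x0 lam) (lam ^ 2 * K).
Proof.
  intros Hps Henergy l1 l2 N1 N2.
  assert (Hlam : 0 <= lam ^ 2) by apply pow2_ge_0.
  assert (Hedges : fsum l1 (fun p => b (fst p) (snd p)
              * Cnorm2 (Cminus (scaled_dist sigma x0 lam (fst p)) (scaled_dist sigma x0 lam (snd p))))
       <= lam ^ 2 * fsum l1 (fun p => b (fst p) (snd p) * sigma (fst p) (snd p) ^ 2)).
  { rewrite <- fsum_scal. apply fsum_le. intros [z w]; simpl.
    unfold Cnorm2, Cminus, scaled_dist; simpl.
    pose proof (pseudometric_lipschitz_sq sigma x0 z w Hps) as Hlip.
    pose proof (Hb z w).
    replace ((lam * sigma x0 z - lam * sigma x0 w) * (lam * sigma x0 z - lam * sigma x0 w)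
             + (0 - 0) * (0 - 0)) with (lam ^ 2 * (sigma x0 z - sigma x0 w) ^ 2) by ring.
    assert (0 <= b z w * (lam ^ 2 * (sigma z w ^ 2 - (sigma x0 z - sigma x0 w) ^ 2))).
    { apply Rmult_le_pos; auto. apply Rmult_le_pos; lra. }
    nra. }
  assert (Hkill : fsum l2 (fun z => c z * Cnorm2 (scaled_dist sigma x0 lam z))
                  = lam ^ 2 * fsum l2 (fun z => c z * sigma x0 z ^ 2)).
  { rewrite <- fsum_scal. apply fsum_ext. intros z. unfold Cnorm2, scaled_dist; simpl. ring. }
  specialize (Henergy l1 l2 N1 N2).
  apply (Rmult_le_compat_l (lam ^ 2)) in Henergy; auto.
  rewrite Hkill. lra.
Qed.

Lemma le_sqrt_mul_of_scaled (s t K : R) :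
  0 <= s -> 0 <= K ->
  (forall lam, 0 <= lam -> lam ^ 2 * K <= 1 -> lam * s <= t) -> s <= sqrt K * t.
Proof.
  intros Hs HK Hscaled.
  destruct (Rle_lt_or_eq_dec 0 K HK) as [Kpos | K0].
  - assert (Hsqrt : 0 < sqrt K) by (apply sqrt_lt_R0; auto).
    assert (Hopt : (/ sqrt K) ^ 2 * K = 1).
    { rewrite <- (sqrt_sqrt K) at 2 by lra. field. lra. }
    specialize (Hscaled (/ sqrt K) (Rlt_le _ _ (Rinv_0_lt_compat _ Hsqrt))).
    rewrite Hopt in Hscaled. specialize (Hscaled (Rle_refl _)).
    apply (Rmult_le_compat_l (sqrt K)) in Hscaled; [| lra].
    rewrite <- Rmult_assoc, Rinv_r in Hscaled by lra. lra.
  - subst K. rewrite sqrt_0, Rmult_0_l.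
    destruct (Rle_or_lt s 0) as [Hle | Hgt]; auto.
    (* with K = 0 every scale is admissible, forcing s = 0 *)
    assert (Hlam : 0 <= (Rabs t + 1) / s).
    { apply Rlt_le, Rdiv_lt_0_compat; auto. pose proof (Rabs_pos t); lra. }
    specialize (Hscaled _ Hlam ltac:(lra)).
    unfold Rdiv in Hscaled. rewrite Rmult_assoc, Rinv_l in Hscaled by lra.
    pose proof (Rle_abs t). lra.
Qed.

Lemma sigma_le_of_energy {X : Type} (b : X -> X -> R) (c : X -> R)
  (sigma : X -> X -> R) (x0 y0 : X) (K t : R) (Hb : forall x y, 0 <= b x y) :
  pseudometric sigma -> energy_le b c sigma x0 K -> rho_le b c x0 y0 t ->
  sigma x0 y0 <= sqrt K * t.
Proof.
  intros Hps Henergy Hrho.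
  assert (HK : 0 <= K).
  { specialize (Henergy nil nil (NoDup_nil _) (NoDup_nil _)). simpl in Henergy. lra. }
  pose proof Hps as [Hnonneg [Hdiag _]].
  apply le_sqrt_mul_of_scaled; auto.
  intros lam Hlam HlamK.
  assert (Hf := Hrho (scaled_dist sigma x0 lam)).
  unfold Cnorm, Cnorm2, Cminus, scaled_dist in Hf; simpl in Hf.
  rewrite Hdiag in Hf.
  replace ((lam * 0 - lam * sigma x0 y0) * (lam * 0 - lam * sigma x0 y0) + (0 - 0) * (0 - 0))
    with ((lam * sigma x0 y0) ^ 2) in Hf by ring.
  rewrite sqrt_pow2 in Hf by (apply Rmult_le_pos; auto).
  apply Hf. intros l1 l2 N1 N2.
  eapply Rle_trans; [apply (scaled_dist_Qtilde_le b c sigma x0 K lam Hb Hps Henergy) |]; auto.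
Qed.

Lemma energy_le_no_killing {X : Type} (b : X -> X -> R) (c : X -> R) (m : X -> R)
  (mX : R) (sigma : X -> X -> R) (x0 : X) :
  has_sum m mX -> intrinsic b m sigma -> (forall x, c x = 0) ->
  energy_le b c sigma x0 mX.
Proof.
  intros HmX Hint Hc0 l1 l2 N1 N2.
  assert (Hkill : fsum l2 (fun z => c z * sigma x0 z ^ 2) = 0).
  { rewrite (fsum_ext _ _ (fun z => 0 * c z)) by (intro; rewrite Hc0; ring).
    rewrite fsum_scal; ring. }
  pose proof (intrinsic_edge_energy_le b m mX sigma HmX Hint l1 N1). lra.
Qed.

Lemma energy_le_bounded {X : Type} (b : X -> X -> R) (c : X -> R) (m : X -> R)
  (mX Cc S : R) (sigma : X -> X -> R) (x0 : X) :
  (forall x, 0 <= c x) -> has_sum m mX -> intrinsic b m sigma -> pseudometric sigma ->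
  has_sum c Cc -> (forall x y, sigma x y <= S) ->
  energy_le b c sigma x0 (mX + Cc * S ^ 2).
Proof.
  intros Hc HmX Hint [Hnonneg _] HC HS l1 l2 N1 N2.
  pose proof (intrinsic_edge_energy_le b m mX sigma HmX Hint l1 N1).
  assert (Hkill : fsum l2 (fun z => c z * sigma x0 z ^ 2) <= S ^ 2 * fsum l2 c).
  { rewrite <- fsum_scal. apply fsum_le. intros z. rewrite (Rmult_comm (S ^ 2)).
    apply Rmult_le_compat_l; auto. apply pow_incr; auto. }
  assert (fsum l2 c <= Cc) by (apply has_sum_partial_le; auto).
  assert (S ^ 2 * fsum l2 c <= S ^ 2 * Cc) by (apply Rmult_le_compat_l; auto; apply pow2_ge_0).
  lra.
Qed.

Theorem mainTheorem3 (X : Type) (HX : countably_infinite X)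
  (b : X -> X -> R) (c : X -> R) (Hbc : weighted_graph b c)
  (m : X -> R) (Hm : forall x, 0 <= m x) (mX : R) (HmX : has_sum m mX)
  (sigma : X -> X -> R) (Hps : pseudometric sigma) (Hint : intrinsic b m sigma) :
  ((forall x, c x = 0) -> bounded_by_rho b c sigma (sqrt mX)) /\
  (forall (Cc S : R), has_sum c Cc -> 0 <= S -> (forall x y, sigma x y <= S) ->
     bounded_by_rho b c sigma (sqrt (mX + Cc * S ^ 2))).
Proof.
  destruct Hbc as [Hb [_ [_ [_ Hc]]]].
  split.
  - intros Hc0 x y t Hrho.
    apply (sigma_le_of_energy b c sigma x y mX t Hb Hps); auto.
    apply (energy_le_no_killing b c m); auto.
  - intros Cc S HC _ HS x y t Hrho.
    apply (sigma_le_of_energy b c sigma x y _ t Hb Hps); auto.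
    apply (energy_le_bounded b c m); auto.
Qed.
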